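(* Let $\nu\ge 1$, let $n_1,\dots,n_\nu\ge 0$ be integers, $N=n_1+\dots+n_\nu$, and let $\Omega=\coprod_{j=1}^{\nu}P_j$ be a set with $N$ elements partitioned into disjoint subsets with $\#P_j=n_j$. Let $S_N$ be the group of permutations of $\Omega$ and $Y\{n_j\}\subset S_N$ the Young subgroup of permutations sending each $P_j$ to itself. In the algebra $\Delta\{n_j\}$ (notation in the context), for any two admissible matrices $\{a_{ij}\}$ and $\{b_{jk}\}$ we have $$\Xi\{a_{ij}\}\cdot \Xi\{b_{jk}\}=\sum_{\{c_{ik}\}}\frac{\prod_{i,j} a_{ij}!\,\prod_{j,k} b_{jk}!}{\prod_j n_j!}\left(\sum_{\{t_{ijk}\}}\frac{1}{\prod_{i,j,k}t_{ijk}!}\right)\Xi\{c_{ik}\},$$ where the outer sum is over all admissible matrices $\{c_{ik}\}$, and the inner sum is over all collections of integers $t_{ijk}\ge 0$ ($i,j,k=1,\dots,\nu$) such that $\sum_i t_{ijk}=b_{jk}$, $\sum_j t_{ijk}=c_{ik}$, $\sum_k t_{ijk}=a_{ij}$ for all indices.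
   Context: An admissible matrix is a $\nu\times\nu$ matrix $\{a_{ij}\}$ of nonnegative integers with $\sum_i a_{ij}=n_j$ for all $j$ and $\sum_j a_{ij}=n_i$ for all $i$. Each double coset $Y\{n_j\}\,g\,Y\{n_j\}$ is determined by the admissible matrix $a_{ij}=\#(g(P_i)\cap P_j)$, and every admissible matrix arises this way; denote this double coset by $\xi\{a_{ij}\}$. Its cardinality is $\mu\{a_{ij}\}=\prod_j (n_j!)^2/\prod_{i,j}a_{ij}!$. Let $\Pi=\frac{1}{\prod_j n_j!}\sum_{h\in Y\{n_j\}}h\in\mathbb{C}[S_N]$ and $\Delta\{n_j\}=\Pi\,\mathbb{C}[S_N]\,\Pi$, the subalgebra of the group algebra of elements invariant under left and right multiplication by $Y\{n_j\}$. It has basis $\Xi\{a_{ij}\}=\frac{1}{\mu\{a_{ij}\}}\sum_{g\in\xi\{a_{ij}\}}g$, indexed by admissible matrices. *)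

From HB Require Import structures.
From mathcomp Require Import all_boot all_order all_algebra all_fingroup.
From mathcomp Require Import algC.
Set Implicit Arguments. Unset Strict Implicit. Unset Printing Implicit Defensive.
Import GRing.Theory Num.Theory.
Local Open Scope ring_scope.

(* Omega is a finite type T; the partition Omega = coprod_j P_j is given by
   the block map p : T -> 'I_nu, i.e. P_j = [set x | p x == j]. *)

Definition young (T : finType) (nu : nat) (p : T -> 'I_nu) : {set {perm T}} :=
  [set s : {perm T} | [forall x, p (s x) == p x]].

Definition pmat (T : finType) (nu : nat) (p : T -> 'I_nu) (g : {perm T})
  (i j : 'I_nu) : nat := #|[set x | (p x == i) && (p (g x) == j)]|.

Definition admissible (nu : nat) (n : 'I_nu -> nat) (a : 'I_nu -> 'I_nu -> nat)
  : bool :=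
  [forall j, (\sum_i a i j == n j)%N] && [forall i, (\sum_j a i j == n i)%N].

Definition dcoset (T : finType) (nu : nat) (p : T -> 'I_nu)
  (a : 'I_nu -> 'I_nu -> nat) : {set {perm T}} :=
  [set g : {perm T} | [forall i, forall j, pmat p g i j == a i j]].

(* the group algebra C[S_N]: an element is sum_s f(s) s *)
Notation galg T := {ffun {perm T} -> algC}.

(* product in C[S_N]; mathcomp's product of permutations (s * t) x = t (s x) *)
Definition gmul (T : finType) (f g : galg T) : galg T :=
  [ffun s : {perm T} => \sum_(t : {perm T}) f t * g (t^-1 * s)%g].

Definition Xi (T : finType) (nu : nat) (p : T -> 'I_nu)
  (a : 'I_nu -> 'I_nu -> nat) : galg T :=
  [ffun s : {perm T} => if s \in dcoset p a then (#|dcoset p a|%:R)^-1 else 0].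

(* bounded matrices, used to index the finite sums *)
Definition mat_of (nu m : nat) (c : {ffun 'I_nu * 'I_nu -> 'I_m})
  (i k : 'I_nu) : nat := c (i, k).

Definition tcond (nu m : nat) (a b c : 'I_nu -> 'I_nu -> nat)
  (t : {ffun 'I_nu * 'I_nu * 'I_nu -> 'I_m}) : bool :=
  [&& [forall j, forall k, (\sum_i (t (i, j, k) : nat) == b j k)%N],
      [forall i, forall k, (\sum_j (t (i, j, k) : nat) == c i k)%N] &
      [forall i, forall j, (\sum_k (t (i, j, k) : nat) == a i j)%N]].

(* At s, the product Xi{a} Xi{b} equals #{g | g in xi{a}, g^-1 s in xi{b}} / (mu{a} mu{b}),
   and s lies in exactly one xi{c}.  Sorting these g by the numbers
   t_ijk = #{x in P_i | g x in P_j, s x in P_k} produces exactly the solutions {t_ijk} of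
   the constraints, and the g with given {t_ijk} number prod c! prod n! / prod t!.
   This count and mu{a} = (prod n!)^2 / prod a! are instances of one formula: the
   permutations g with prescribed #{x | q x = l, p (g x) = k} = t_lk number
   prod_l #q^-1(l)! prod_k #p^-1(k)! / prod t!.  Indeed f = p o g is a function with
   prescribed profile on the blocks of q, of which there are prod_l #q^-1(l)! / prod t!
   (a product of multinomial coefficients, by induction on the domain), and each such f
   lifts to prod_k #p^-1(k)! permutations. *)

From mathcomp Require Import all_boot all_order all_algebra all_fingroup.
From mathcomp Require Import algC.
From mathcomp.algebra_tactics Require Import ring.
Set Implicit Arguments. Unset Strict Implicit. Unset Printing Implicit Defensive.
Import GRing.Theory Num.Theory.

Lemma card_fibers (U V : finType) (S : {set U}) (g : U -> V) :
  #|S| = \sum_v #|[set u in S | g u == v]|.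
Proof.
rewrite -sum1_card (partition_big g predT) //; apply: eq_bigr => v _.
by rewrite sum1dep_card.
Qed.

Lemma sum_delta (I J : finType) (i0 i : I) (j0 : J) :
  \sum_j ((i0, j0) == (i, j) : nat) = (i0 == i).
Proof.
rewrite (bigD1 j0) //= big1 => [|j nj]; first by rewrite xpair_eqE eqxx andbT addn0.
by rewrite xpair_eqE (eq_sym j0) (negbTE nj) andbF.
Qed.

Lemma prod_fact_delta (I : finType) (i0 : I) (u : I -> nat) :
  \prod_i ((i0 == i) + u i)`! = (u i0).+1 * \prod_i (u i)`!.
Proof.
rewrite (bigD1 i0) //= [in RHS](bigD1 i0) //= eqxx add1n factS mulnA.
by congr (_ * _); apply: eq_bigr => i ni; rewrite eq_sym (negbTE ni).
Qed.

Lemma prod_fact_delta_pair (I J : finType) (i0 : I) (j0 : J) (u v : I -> J -> nat) :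
  (forall i j, u i j = ((i0, j0) == (i, j)) + v i j) ->
  \prod_i \prod_j (u i j)`! = u i0 j0 * \prod_i \prod_j (v i j)`!.
Proof.
move=> uE; rewrite !pair_big uE eqxx add1n -(prod_fact_delta (i0, j0) (fun ij => v ij.1 ij.2)).
by apply: eq_bigr => -[i j] _; rewrite uE.
Qed.

Section ProfileFunctions.
Variables (T L K : finType) (q : T -> L) (d : T -> K).

Definition profile_on (A : {set T}) (f : T -> K) l k :=
  #|[set x in A | (q x == l) && (f x == k)]|.

(* Outside [A] the functions are frozen to [d], so that they are in effect functions on [A]. *)
Definition profile_functions (A : {set T}) (t : L -> K -> nat) :=
  [set f : {ffun T -> K} | [forall x, (x \notin A) ==> (f x == d x)] &&
     [forall l, forall k, profile_on A f l k == t l k]].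

Lemma profile_onD1 (A : {set T}) x (f : T -> K) l k : x \in A ->
  profile_on A f l k = ((q x, f x) == (l, k)) + profile_on (A :\ x) f l k.
Proof.
move=> xA; rewrite /profile_on (cardsD1 x) !inE xA xpair_eqE; congr (_ + _).
by apply: eq_card => y; rewrite !inE andbA.
Qed.

Lemma profile_functions0 t : (forall l k, t l k = 0) ->
  profile_functions set0 t = [set finfun d].
Proof.
move=> t0; apply/setP=> f; rewrite !inE; apply/andP/eqP => [[/forallP fd _]|->].
  by apply/ffunP=> x; rewrite ffunE; apply/eqP; have := fd x; rewrite inE.
split; apply/forallP => x; first by rewrite ffunE eqxx implybT.
apply/forallP=> k; rewrite t0 cards_eq0; apply/eqP/setP=> y; by rewrite !inE.
Qed.

Lemma card_profile_functions_at (A : {set T}) t t' x k : x \in A ->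
  (forall l k', t l k' = ((q x, k) == (l, k')) + t' l k') ->
  #|[set f in profile_functions A t | f x == k]| =
  #|profile_functions (A :\ x) t'|.
Proof.
move=> xA tE; pose upd (f : {ffun T -> K}) v := [ffun y => if y == x then v else f y].
have updA' f v l k' : profile_on (A :\ x) (upd f v) l k' = profile_on (A :\ x) f l k'.
  by apply: eq_card => y; rewrite !inE ffunE; case: (y =P x).
have -> : [set f in profile_functions A t | f x == k] =
          (upd^~ k) @: profile_functions (A :\ x) t'.
  apply/setP=> f; rewrite !inE; apply/idP/imsetP.
    case/andP=> /andP[/forallP fd /forallP ft] /eqP fx.
    exists (upd f (d x)); last by apply/ffunP=> y; rewrite !ffunE; case: (y =P x) => // ->.
    rewrite inE; apply/andP; split; apply/forallP.
      by move=> y; rewrite ffunE !inE negb_and negbK; case: (y =P x) => [->|_] //=.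
    move=> l; apply/forallP=> k'; rewrite updA'; have /forallP/(_ k')/eqP := ft l.
    by rewrite (profile_onD1 _ _ _ xA) fx tE => /addnI ->.
  case=> g; rewrite inE => /andP[/forallP gd /forallP gt] ->.
  rewrite [upd g k x]ffunE !eqxx andbT; apply/andP; split; apply/forallP=> y.
    apply/implyP=> yA; rewrite ffunE; case: (y =P x) => [yx|_]; first by rewrite yx xA in yA.
    by have := gd y; rewrite !inE (negbTE yA) andbF.
  apply/forallP=> k'; rewrite (profile_onD1 _ _ _ xA) updA' ffunE eqxx tE.
  by have /forallP/(_ k')/eqP -> := gt y.
rewrite card_in_imset // => g1 g2; rewrite !inE => /andP[/forallP g1d _] /andP[/forallP g2d _] e.
apply/ffunP=> y; case: (y =P x) => [->|/eqP nyx].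
  by have := g1d x; have := g2d x; rewrite !inE eqxx /= => /eqP -> /eqP ->.
by have := congr1 (fun f : {ffun T -> K} => f y) e; rewrite !ffunE (negbTE nyx).
Qed.

Lemma profile_functions_at0 (A : {set T}) t x k : x \in A -> t (q x) k = 0 ->
  [set f in profile_functions A t | f x == k] = set0.
Proof.
move=> xA t0; apply/setP=> f; rewrite !inE; apply/negbTE/andP => -[/andP[_ ft] /eqP fx].
by have /forallP/(_ k)/eqP := forallP ft (q x); rewrite (profile_onD1 _ _ _ xA) fx eqxx t0.
Qed.

Lemma card_profile_functions_on n (A : {set T}) t : #|A| = n ->
  (forall l, \sum_k t l k = #|[set x in A | q x == l]|) ->
  #|profile_functions A t| * \prod_l \prod_k (t l k)`! =
  \prod_l #|[set x in A | q x == l]|`!.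
Proof.
elim: n A t => [|n IH] A t cA ht.
  have A0 : A = set0 by apply/eqP; rewrite -cards_eq0 cA.
  have fib0 l : #|[set x in A | q x == l]| = 0.
    by apply/eqP; rewrite cards_eq0 A0; apply/eqP/setP=> x; rewrite !inE.
  have t0 l k : t l k = 0.
    by move: (ht l); rewrite fib0 => /eqP; rewrite sum_nat_eq0 => /forallP/(_ k)/eqP.
  rewrite [RHS]big1 => [|l _]; last by rewrite fib0.
  rewrite A0 profile_functions0 // cards1 mul1n big1 // => l _.
  by rewrite big1 // => k _; rewrite t0.
have [x xA] : exists x, x \in A by apply/set0Pn; rewrite -card_gt0 cA.
have cA' : #|A :\ x| = n by move: cA; rewrite (cardsD1 x) xA add1n => -[].
have fibD1 l : #|[set y in A | q y == l]| = (q x == l) + #|[set y in A :\ x | q y == l]|.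
  by rewrite (cardsD1 x) !inE xA; congr (_ + _); apply: eq_card => y; rewrite !inE andbA.
rewrite (card_fibers _ (fun f : {ffun T -> K} => f x)) big_distrl /=.
have fibx : #|[set y in A :\ x | q y == q x]|.+1 = \sum_k t (q x) k.
  by rewrite ht fibD1 eqxx.
rewrite (eq_bigr _ (fun l _ => congr1 factorial (fibD1 l))) prod_fact_delta fibx.
rewrite big_distrl /=; apply: eq_bigr => k _.
have [t0|tpos] := posnP (t (q x) k).
  by rewrite t0 profile_functions_at0 // cards0.
pose t' l k' := t l k' - ((q x, k) == (l, k')).
have tE l k' : t l k' = ((q x, k) == (l, k')) + t' l k'.
  by rewrite subnKC //; case: eqP => [[<- <-]|].
rewrite (card_profile_functions_at xA tE) (prod_fact_delta_pair tE) mulnCA IH // => l.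
apply/eqP; rewrite -(eqn_add2l (q x == l)) -fibD1 -ht (eq_bigr _ (fun k' _ => tE l k')).
by rewrite big_split sum_delta.
Qed.

End ProfileFunctions.

Lemma card_profile_ffuns (T L K : finType) (q : T -> L) (t : L -> K -> nat) :
  (forall l, \sum_k t l k = #|[set x | q x == l]|) ->
  #|[set f : {ffun T -> K} | [forall l, forall k,
      #|[set x | (q x == l) && (f x == k)]| == t l k]]| * \prod_l \prod_k (t l k)`!
  = \prod_l #|[set x | q x == l]|`!.
Proof.
move=> ht.
have d : T -> K. (* if [K] is empty, so is [T] *)
  move=> x; have [k0 _|K0] := pickP K; first exact: k0.
  exfalso; move: (ht (q x)); rewrite big_pred0 // => /esym/eqP.
  by rewrite cards_eq0 => /eqP/setP/(_ x); rewrite !inE eqxx.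
have fibT l : #|[set x in setT | q x == l]| = #|[set x | q x == l]|.
  by apply: eq_card => x; rewrite !inE.
rewrite -(eq_bigr _ (fun l _ => congr1 factorial (fibT l))).
rewrite -(@card_profile_functions_on _ _ _ q d _ setT t erefl) => [|l]; last by rewrite fibT.
congr (_ * _); apply: eq_card => f; rewrite !inE.
have -> /= : [forall x, (x \notin [set: T]) ==> (f x == d x)] by apply/forallP => x; rewrite inE.
apply: eq_forallb => l; apply: eq_forallb => k; congr (_ == _).
by apply: eq_card => x; rewrite !inE.
Qed.

Lemma lift_profile (T K : finType) (p f : T -> K) (g : {perm T}) k y :
  (forall x, p (g x) = f x) ->
  #|[set x | (f x == k) && (g x == y)]| = (p y == k).
Proof.
move=> gf; have -> : [set x | (f x == k) && (g x == y)] =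
                     [set x | (x == (g^-1)%g y) && (p y == k)].
  apply/setP=> x; rewrite !inE -gf (canF_eq (permK g)).
  by case: (x =P _) => [->|_]; rewrite ?permKV ?eqxx ?andbT ?andbF.
case: (p y == k).
  by rewrite (_ : [set x | _] = [set (g^-1)%g y]) ?cards1 //; apply/setP=> x; rewrite !inE andbT.
by rewrite (_ : [set x | _] = set0) ?cards0 //; apply/setP=> x; rewrite !inE andbF.
Qed.

Lemma profile_lift (T K : finType) (p f : T -> K) (h : T -> T) :
  (forall k y, #|[set x | (f x == k) && (h x == y)]| = (p y == k)) ->
  injective h /\ forall x, p (h x) = f x.
Proof.
move=> hH; have fibh y : #|[set x | h x == y]| = 1.
  have fibk k : #|[set x in [set x | h x == y] | f x == k]| = (p y == k).
    by rewrite -hH; apply: eq_card => x; rewrite !inE andbC.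
  rewrite (card_fibers _ f) (bigD1 (p y)) //= big1 => [|k nk]; first by rewrite fibk eqxx.
  by rewrite fibk eq_sym (negbTE nk).
split=> [x1 x2 e | x].
  have [z /setP hz] := cards1P (introT eqP (fibh (h x1))).
  by move: (hz x1) (hz x2); rewrite !inE e eqxx => /esym/eqP -> /esym/eqP.
apply/eqP; have := hH (f x) (h x); case: (p (h x) == f x) => // /eqP.
by rewrite cards_eq0 => /eqP/setP/(_ x); rewrite !inE !eqxx.
Qed.

Lemma card_perm_lifts (T K : finType) (p f : T -> K) :
  (forall k, #|[set x | f x == k]| = #|[set x | p x == k]|) ->
  #|[set g : {perm T} | [forall x, p (g x) == f x]]| =
  \prod_k #|[set x | p x == k]|`!.
Proof.
move=> hf; have := @card_profile_ffuns T K T f (fun k y => p y == k).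
rewrite (eq_bigr _ (fun k _ => congr1 factorial (hf k))) => <- => [|k]; last first.
  by rewrite hf -sum1dep_card [RHS]big_mkcond; apply: eq_bigr => y _; case: (p y == k).
rewrite [X in _ * X]big1 ?muln1 => [|k _]; last by rewrite big1 // => y _; case: (p y == k).
set H := [set h : {ffun T -> T} | _].
suff -> : H = val @: [set g : {perm T} | [forall x, p (g x) == f x]].
  by rewrite card_imset //; exact: val_inj.
apply/setP=> h; rewrite inE; apply/idP/imsetP => [/forallP hH | [g]]; last first.
  rewrite inE => /forallP gf ->; apply/forallP=> k; apply/forallP=> y.
  rewrite (eq_card (B := [set x | (f x == k) && (g x == y)])) => [|x]; last by rewrite !inE pvalE.
  by rewrite (lift_profile k y (fun x => eqP (gf x))).
have [hinj hf'] := profile_lift (fun k y => eqP (forallP (hH k) y)).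
exists (perm hinj); last by apply/ffunP=> x; rewrite pvalE permE.
by rewrite inE; apply/forallP=> x; rewrite permE hf'.
Qed.

Lemma card_perms_with_profile (T L K : finType) (q : T -> L) (p : T -> K)
    (t : L -> K -> nat) :
  (forall l, \sum_k t l k = #|[set x | q x == l]|) ->
  (forall k, \sum_l t l k = #|[set x | p x == k]|) ->
  #|[set g : {perm T} | [forall l, forall k,
      #|[set x | (q x == l) && (p (g x) == k)]| == t l k]]|
    * \prod_l \prod_k (t l k)`! =
  \prod_l #|[set x | q x == l]|`! * \prod_k #|[set x | p x == k]|`!.
Proof.
move=> hq hp; rewrite -(card_profile_ffuns hq) mulnAC; congr (_ * _).
set F := [set f : {ffun T -> K} | _].
pose lift (g : {perm T}) : {ffun T -> K} := [ffun x => p (g x)].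
have liftF g : (lift g \in F) = [forall l, forall k,
    #|[set x | (q x == l) && (p (g x) == k)]| == t l k].
  rewrite inE; apply: eq_forallb => l; apply: eq_forallb => k; congr (_ == _).
  by apply: eq_card => x; rewrite !inE ffunE.
rewrite (card_fibers _ lift) (bigID (mem F)) /= [X in _ + X]big1 ?addn0 => [|f fF].
  rewrite -sum1_card big_distrl /=; apply: eq_bigr => f fF; rewrite mul1n.
  move: (fF); rewrite inE => /forallP ft.
  rewrite -(@card_perm_lifts _ _ p f) => [|k]; last first.
    rewrite -hp (card_fibers _ q); apply: eq_bigr => l _.
    by rewrite -(eqP (forallP (ft l) k)); apply: eq_card => x; rewrite !inE andbC.
  apply: eq_card => g; rewrite !inE; apply/andP/forallP => [[_ /eqP <- x]|gf].
    by rewrite ffunE.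
  have lf : lift g = f by apply/ffunP => x; rewrite ffunE (eqP (gf x)).
  by split; [rewrite -liftF lf | exact/eqP].
apply/eqP; rewrite cards_eq0; apply/eqP/setP=> g; rewrite !inE.
by apply/negbTE/andP => -[gS /eqP gf]; move: fF; rewrite -gf liftF gS.
Qed.

Section YoungDoubleCosets.
Variables (T : finType) (nu : nat) (n : 'I_nu -> nat) (p : T -> 'I_nu).
Hypothesis hP : forall j, #|[set x | p x == j]| = n j.

Lemma dcosetP (g : {perm T}) a :
  reflect (forall i j, pmat p g i j = a i j) (g \in dcoset p a).
Proof.
rewrite inE; apply: (iffP forallP) => [ga i j | ga i]; first exact/eqP/(forallP (ga i)).
by apply/forallP=> j; rewrite ga.
Qed.

Lemma sum_pmat_row (g : {perm T}) i : \sum_j pmat p g i j = n i.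
Proof.
rewrite -hP (card_fibers _ (fun x => p (g x))); apply: eq_bigr => j _.
by apply: eq_card => x; rewrite !inE.
Qed.

Lemma sum_pmat_col (g : {perm T}) j : \sum_i pmat p g i j = n j.
Proof.
rewrite -hP -(card_preimset _ (@perm_inj _ g)) (card_fibers _ p).
by apply: eq_bigr => i _; apply: eq_card => x; rewrite !inE andbC.
Qed.

Lemma card_dcoset b : admissible n b ->
  #|dcoset p b| * \prod_i \prod_j (b i j)`! = (\prod_j (n j)`!) ^ 2.
Proof.
case/andP=> /forallP bc /forallP br.
rewrite -(eq_bigr _ (fun j _ => congr1 factorial (hP j))) -mulnn.
rewrite -(@card_perms_with_profile _ _ _ p p b) => [|i|j]; rewrite ?hP.
- by congr (_ * _); apply: eq_card => g; rewrite !inE.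
- exact/eqP/br.
- exact/eqP/bc.
Qed.

Lemma mem_dcoset_mat_of (s : {perm T}) :
  exists c : {ffun 'I_nu * 'I_nu -> 'I_#|T|.+1}, s \in dcoset p (mat_of c).
Proof.
exists [ffun ik => inord (pmat p s ik.1 ik.2)].
by apply/dcosetP=> i k; rewrite /mat_of ffunE inordK // ltnS max_card.
Qed.

Section Triples.
Variables (a b c : 'I_nu -> 'I_nu -> nat) (s : {perm T}).
Hypotheses (ha : admissible n a) (hs : s \in dcoset p c).

Definition triple_count (g : {perm T}) i j k :=
  #|[set x | [&& p x == i, p (g x) == j & p (s x) == k]]|.

Definition triple_profile g : {ffun 'I_nu * 'I_nu * 'I_nu -> 'I_#|T|.+1} :=
  [ffun ijk => inord (triple_count g ijk.1.1 ijk.1.2 ijk.2)].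

Lemma triple_profileE g i j k : triple_profile g (i, j, k) = triple_count g i j k :> nat.
Proof. by rewrite ffunE inordK // ltnS max_card. Qed.

Lemma sum_triple_count_k g i j : \sum_k triple_count g i j k = pmat p g i j.
Proof.
rewrite /pmat (card_fibers _ (fun x => p (s x))); apply: eq_bigr => k _.
by apply: eq_card => x; rewrite !inE andbA.
Qed.

Lemma sum_triple_count_j g i k : \sum_j triple_count g i j k = c i k.
Proof.
rewrite -(dcosetP _ _ hs).
rewrite /pmat (card_fibers _ (fun x => p (g x))); apply: eq_bigr => j _.
by apply: eq_card => x; rewrite !inE andbA andbAC.
Qed.

Lemma sum_triple_count_i g j k : \sum_i triple_count g i j k = pmat p (g^-1 * s)%g j k.
Proof.
rewrite /pmat -(card_preimset _ (@perm_inj _ g)) (card_fibers _ p).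
by apply: eq_bigr => i _; apply: eq_card => x; rewrite !inE permM permK andbC.
Qed.

Lemma tcond_triple_profile g :
  tcond a b c (triple_profile g) =
  (g \in dcoset p a) && ((g^-1 * s)%g \in dcoset p b).
Proof.
have tE i j k : triple_profile g (i, j, k) = triple_count g i j k :> nat.
  exact: triple_profileE.
rewrite /tcond [X in [&& _, X & _]](_ : _ = true); last first.
  apply/forallP=> i; apply/forallP=> k.
  by rewrite (eq_bigr _ (fun j _ => tE i j k)) sum_triple_count_j.
rewrite andbC /= !inE; congr andb; apply: eq_forallb => i; apply: eq_forallb => j.
  by rewrite (eq_bigr _ (fun k _ => tE i j k)) sum_triple_count_k.
by rewrite (eq_bigr _ (fun k _ => tE k i j)) sum_triple_count_i.
Qed.

Lemma card_dcoset_pairs :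
  #|[set g | (g \in dcoset p a) && ((g^-1 * s)%g \in dcoset p b)]| =
  \sum_(t | tcond a b c t) #|[set g | triple_profile g == t]|.
Proof.
rewrite (card_fibers _ triple_profile) (bigID (tcond a b c)) /=.
rewrite [X in _ + X]big1 ?addn0 => [|t tN].
  apply: eq_bigr => t tc; apply: eq_card => g.
  rewrite in_set [in RHS]in_set in_set -tcond_triple_profile.
  by case: eqP => [->|]; rewrite ?tc ?andbF.
apply/eqP; rewrite cards_eq0; apply/eqP/setP=> g.
rewrite in_set in_set -tcond_triple_profile in_set0.
by case: eqP => [->|]; rewrite ?(negbTE tN) ?andbF.
Qed.

Lemma card_triple_profile_fiber t : tcond a b c t ->
  #|[set g | triple_profile g == t]| * \prod_i \prod_j \prod_k (t (i, j, k))`! =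
  \prod_i \prod_k (c i k)`! * \prod_j (n j)`!.
Proof.
case/and3P=> _ /forallP tc /forallP ta; case/andP: ha => /forallP ac _.
pose q x := (p x, p (s x)).
have fibq ik : #|[set x | q x == ik]| = c ik.1 ik.2.
  case: ik => i k; rewrite -(dcosetP _ _ hs); apply: eq_card => x.
  by rewrite !inE xpair_eqE.
rewrite -(eq_bigr _ (fun j _ => congr1 factorial (hP j))).
have -> : \prod_i \prod_k (c i k)`! = \prod_ik #|[set x | q x == ik]|`!.
  by rewrite pair_big; apply: eq_bigr => ik _; rewrite fibq.
have -> : \prod_i \prod_j \prod_k (t (i, j, k))`! =
          \prod_ik \prod_j (t (ik.1, j, ik.2))`!.
  rewrite (eq_bigr (fun i => \prod_k \prod_j (t (i, j, k))`!)) => [|i _].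
    by rewrite pair_big.
  exact: exchange_big.
rewrite -(@card_perms_with_profile T _ _ q p (fun ik j => t (ik.1, j, ik.2))).
- congr (_ * _); apply: eq_card => g; rewrite !inE; apply/eqP/forallP => [<- [i k]|gt].
    apply/forallP=> j /=; rewrite triple_profileE; apply/eqP/eq_card => x.
    by rewrite !inE xpair_eqE andbAC andbA.
  apply/ffunP=> -[[i j] k]; apply: val_inj => /=.
  rewrite triple_profileE -(eqP (forallP (gt (i, k)) j)); apply/eq_card => x.
  by rewrite !inE xpair_eqE andbAC andbA.
- by move=> [i k]; rewrite fibq; apply/eqP/(forallP (tc i)).
move=> j; rewrite hP -(eqP (ac j)) -(pair_bigA _ (fun i k => (t (i, j, k) : nat))) /=.
apply: eq_bigr => i _.
by rewrite (eqP (forallP (ta i) j)).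
Qed.

End Triples.

Local Open Scope ring_scope.

Lemma natr_prod_neq0 (R : numDomainType) (I : finType) (F : I -> nat) :
  (forall i, 0 < F i)%N -> ((\prod_i F i)%N%:R : R) != 0.
Proof. by move=> F0; rewrite pnatr_eq0 -lt0n prodn_gt0. Qed.

Lemma gmul_Xi a b s :
  gmul (Xi p a) (Xi p b) s =
  #|[set g | (g \in dcoset p a) && ((g^-1 * s)%g \in dcoset p b)]|%:R
    / (#|dcoset p a|%:R * #|dcoset p b|%:R).
Proof.
set D := [set g | _]; rewrite ffunE.
transitivity (\sum_(g in D) (#|dcoset p a|%:R^-1 * #|dcoset p b|%:R^-1) : algC).
  rewrite [RHS]big_mkcond; apply: eq_bigr => g _; rewrite !ffunE /D in_set.
  by case: (g \in dcoset p a); case: (_ \in dcoset p b); rewrite ?mulr0 ?mul0r.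
by rewrite sumr_const -[_ *+ #|D|]mulr_natr invfM [RHS]mulrC.
Qed.

Lemma dcoset_admissible (g : {perm T}) c : g \in dcoset p c -> admissible n c.
Proof.
move/dcosetP=> gc; apply/andP; split; apply/forallP=> j.
  by rewrite -(eq_bigr _ (fun i _ => gc i j)) sum_pmat_col.
by rewrite -(eq_bigr _ (fun i _ => gc j i)) sum_pmat_row.
Qed.

Lemma sum_Xi_at (F : {ffun 'I_nu * 'I_nu -> 'I_#|T|.+1} -> algC) s c0 :
  s \in dcoset p (mat_of c0) ->
  \sum_(c | admissible n (mat_of c)) F c * Xi p (mat_of c) s =
  F c0 / #|dcoset p (mat_of c0)|%:R.
Proof.
move=> sc0; rewrite (bigD1 c0) ?(dcoset_admissible sc0) //= ffunE sc0.
rewrite big1 ?addr0 // => c /andP[_ cc0]; rewrite ffunE; case: ifP => [sc|_]; last by rewrite mulr0.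
case/eqP: cc0; apply/ffunP => -[i k]; apply: val_inj => /=.
by rewrite -[LHS]/(mat_of c i k) -(dcosetP _ _ sc) (dcosetP _ _ sc0).
Qed.

Lemma card_dcosetE (R : numFieldType) b : admissible n b ->
  (#|dcoset p b|%:R : R) =
  (\prod_j (n j)`!)%N%:R ^+ 2 / (\prod_i \prod_j (b i j)`!)%N%:R.
Proof.
move=> hb; rewrite -natrX -(card_dcoset hb) natrM mulfK //.
by apply: natr_prod_neq0 => i; rewrite prodn_gt0 // => j; exact: fact_gt0.
Qed.

Lemma card_dcoset_pairsE (R : numFieldType) a b c s :
  admissible n a -> s \in dcoset p c ->
  (#|[set g | (g \in dcoset p a) && ((g^-1 * s)%g \in dcoset p b)]|%:R : R) =
  (\prod_i \prod_k (c i k)`!)%N%:R * (\prod_j (n j)`!)%N%:R *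
  \sum_(t : {ffun 'I_nu * 'I_nu * 'I_nu -> 'I_#|T|.+1} | tcond a b c t)
    ((\prod_i \prod_j \prod_k (t (i, j, k))`!)%N%:R)^-1.
Proof.
move=> ha hs; rewrite (card_dcoset_pairs a b hs) natr_sum mulr_sumr; apply: eq_bigr => t tc.
rewrite -natrM -(card_triple_profile_fiber ha hs tc) natrM mulfK //.
apply: natr_prod_neq0 => i; rewrite prodn_gt0 // => j.
by rewrite prodn_gt0 // => k; exact: fact_gt0.
Qed.

End YoungDoubleCosets.

Local Open Scope ring_scope.

Unset Implicit Arguments.

Theorem proposition1 (nu : nat) (n : 'I_nu -> nat) (T : finType)
  (p : T -> 'I_nu) (hnu : (0 < nu)%N)
  (hP : forall j : 'I_nu, #|[set x | p x == j]| = n j)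
  (a b : 'I_nu -> 'I_nu -> nat)
  (ha : admissible n a) (hb : admissible n b) :
  gmul (Xi p a) (Xi p b) =
  [ffun s : {perm T} =>
  \sum_(c : {ffun 'I_nu * 'I_nu -> 'I_(#|T|).+1} | admissible n (mat_of c))
    ((((\prod_i \prod_j (a i j)`!) * (\prod_j \prod_k (b j k)`!))%N%:R
        / (\prod_j (n j)`!)%N%:R)
     * \sum_(t : {ffun 'I_nu * 'I_nu * 'I_nu -> 'I_(#|T|).+1}
               | tcond a b (mat_of c) t)
         ((\prod_i \prod_j \prod_k (t (i, j, k))`!)%N%:R)^-1)
    * Xi p (mat_of c) s].
Proof.
apply/ffunP => s; rewrite [RHS]ffunE.
have [c sc] := mem_dcoset_mat_of p s.
rewrite (sum_Xi_at hP _ sc) gmul_Xi (card_dcoset_pairsE hP _ b ha sc).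
rewrite !(card_dcosetE hP) //; last exact: (dcoset_admissible hP sc).
rewrite natrM; field.
by rewrite !natr_prod_neq0 // => i; rewrite ?fact_gt0 // prodn_gt0 // => j; exact: fact_gt0.
Qed.
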